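(* Let $E, F, G$ be Banach lattices. (1) The set of almost Grothendieck operators from $E$ to $F$ is a closed linear subspace of $L(E;F)$, and if $T: E \to F$ is almost Grothendieck and $S: H \to E$ is any bounded linear operator from a Banach space $H$, then $T \circ S$ is almost Grothendieck. (2) If $T: E \to F$ is almost Grothendieck and $R: F \to G$ is a bounded operator whose adjoint $R': G' \to F'$ maps disjoint sequences to disjoint sequences, then $R \circ T: E \to G$ is almost Grothendieck.
   Context: A bounded operator $T: X \to F$ from a Banach space $X$ to a Banach lattice $F$ is almost Grothendieck if $T'y_n' \to 0$ weakly in $X'$ for every disjoint weak* null sequence $(y_n')$ in the dual Banach lattice $F'$. $L(E;F)$ denotes the Banach space of bounded linear operators with the operator norm. *)

(* Banach spaces = completeNormedModType R over R : realType. Duals are represented as functions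
   X -> R satisfying the predicate [dual]. *)
From HB Require Import structures.
From mathcomp Require Import all_boot all_order all_algebra.
From mathcomp Require Import all_classical all_reals all_analysis.
Set Implicit Arguments. Unset Strict Implicit. Unset Printing Implicit Defensive.
Import Order.TTheory GRing.Theory Num.Theory.
Import numFieldNormedType.Exports.
Local Open Scope classical_set_scope.
Local Open Scope ring_scope.

Section Defs.
Variable R : realType.

Definition bounded_linear (U V : normedModType R) (T : U -> V) : Prop :=
  (forall (a : R) (x y : U), T (a *: x + y) = a *: T x + T y) /\
  exists C : R, forall x, `|T x| <= C * `|x|.

Definition dual (X : normedModType R) (f : X -> R) : Prop :=
  (forall (a : R) (x y : X), f (a *: x + y) = a * f x + f y) /\
  exists C : R, forall x, `|f x| <= C * `|x|.

(* bounded linear functionals on X' (elements of the bidual X''), with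
   |Phi f| <= C ||f|| written via the definition of the operator norm *)
Definition bidual (X : normedModType R) (Phi : (X -> R) -> R) : Prop :=
  (forall (a : R) (f g : X -> R), dual f -> dual g ->
      Phi (fun x => a * f x + g x) = a * Phi f + Phi g) /\
  exists C : R, forall f : X -> R, dual f ->
      forall M : R, 0 <= M -> (forall x, `|f x| <= M * `|x|) ->
      `|Phi f| <= C * M.

Definition weak_null_dual (X : normedModType R) (g : nat -> X -> R) : Prop :=
  forall Phi : (X -> R) -> R, bidual Phi -> (fun n => Phi (g n)) @ \oo --> (0 : R).

Definition weakstar_null (X : normedModType R) (g : nat -> X -> R) : Prop :=
  forall x : X, (fun n => g n x) @ \oo --> (0 : R).

Definition is_sup2 (X : Type) (le : X -> X -> Prop) (a b s : X) : Prop :=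
  [/\ le a s, le b s & forall u, le a u -> le b u -> le s u].

Record banach_lattice (X : normedModType R) (le : X -> X -> Prop) : Prop := {
  bl_refl : forall x, le x x;
  bl_antisym : forall x y, le x y -> le y x -> x = y;
  bl_trans : forall x y z, le x y -> le y z -> le x z;
  bl_add : forall x y z, le x y -> le (x + z) (y + z);
  bl_scale : forall (a : R) x y, 0 <= a -> le x y -> le (a *: x) (a *: y);
  bl_sup : forall x y, exists s, is_sup2 le x y s;
  bl_norm : forall x y mx my, is_sup2 le x (- x) mx -> is_sup2 le y (- y) my ->
             le mx my -> `|x| <= `|y|
}.

Definition dual_le (X : normedModType R) (le : X -> X -> Prop) (f g : X -> R) :=
  forall x, le 0 x -> f x <= g x.

(* disjointness in the dual Banach lattice F': |f| /\ |g| = 0, i.e. the only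
   positive element of F' below both |f| = sup(f,-f) and |g| = sup(g,-g) is 0;
   "h <= |f|" is written as "h <= every upper bound of {f, -f} in F'". *)
Definition dual_disjoint (X : normedModType R) (le : X -> X -> Prop) (f g : X -> R) :=
  forall h : X -> R, dual h -> dual_le le (fun _ => 0) h ->
    (forall u, dual u -> dual_le le f u -> dual_le le (fun x => - f x) u ->
        dual_le le h u) ->
    (forall u, dual u -> dual_le le g u -> dual_le le (fun x => - g x) u ->
        dual_le le h u) ->
    forall x, h x = 0.

Definition disjoint_seq (X : normedModType R) (le : X -> X -> Prop) (g : nat -> X -> R) :=
  forall n m, n <> m -> dual_disjoint le (g n) (g m).

(* almost Grothendieck operators T : X -> F, F a Banach lattice with order le;
   the adjoint is T' y' = y' \o T *)
Definition almost_grothendieck (X F : normedModType R) (le : F -> F -> Prop)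
  (T : X -> F) : Prop :=
  bounded_linear T /\
  forall g : nat -> F -> R, (forall n, dual (g n)) -> disjoint_seq le g ->
    weakstar_null g -> weak_null_dual (fun n x => g n (T x)).

End Defs.

From HB Require Import structures.
From mathcomp Require Import all_boot all_order all_algebra.
From mathcomp Require Import all_classical all_reals all_analysis.
From mathcomp Require Import ring lra.
Import Order.TTheory GRing.Theory Num.Theory.
Import numFieldNormedType.Exports.
Local Open Scope classical_set_scope.
Local Open Scope ring_scope.

(* The adjoint of [T] sends a sequence [g] of F' to [g n \o T], and every
   operation in the theorem acts on these adjoint sequences in a way that
   preserves weak nullity: sums and multiples are handled by linearity of the
   bidual functionals, right composition with [S] by precomposing a bidual
   functional with [S''], and left composition with [R] by feeding the disjoint
   weak* null sequence [g n \o R] to the hypothesis on [T].  For closedness, a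
   disjoint weak* null sequence is norm bounded by the Banach-Steinhaus theorem,
   so [Phi (g n \o T)] is uniformly approximated by the null sequences
   [Phi (g n \o T_N)].  None of the Banach lattice axioms is needed. *)

Set Implicit Arguments. Unset Strict Implicit.

Section AlmostGrothendieck.
Variable R : realType.

Section BoundedLinear.
Variables U V : normedModType R.

Lemma bounded_linear0 (T : U -> V) : bounded_linear T -> T 0 = 0.
Proof.
case=> lin _; have := lin (-1) 0 0.
by rewrite scaleN1r oppr0 addr0 scaleN1r addNr.
Qed.

Lemma bounded_linearZ (T : U -> V) a x : bounded_linear T -> T (a *: x) = a *: T x.
Proof.
move=> hT; have := (proj1 hT) a x 0.
by rewrite !addr0 (bounded_linear0 hT) addr0.
Qed.

Lemma bounded_linearD (T : U -> V) x y : bounded_linear T -> T (x + y) = T x + T y.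
Proof. by move=> hT; have := (proj1 hT) 1 x y; rewrite !scale1r. Qed.

Lemma bounded_linear_bound (T : U -> V) : bounded_linear T ->
  exists2 C, 0 <= C & forall x, `|T x| <= C * `|x|.
Proof.
case=> _ [C hC]; exists `|C| => // x.
by apply: le_trans (hC x) _; apply: ler_wpM2r => //; exact: ler_norm.
Qed.

Lemma bounded_linear_cst0 : bounded_linear (fun _ : U => (0 : V)).
Proof.
split; first by move=> *; rewrite scaler0 addr0.
by exists 0 => x; rewrite normr0 mul0r.
Qed.

Lemma bounded_linear_add (T S : U -> V) :
  bounded_linear T -> bounded_linear S -> bounded_linear (fun x => T x + S x).
Proof.
move=> hT hS; split.
  move=> a x y; rewrite (proj1 hT) (proj1 hS) scalerDr.
  by rewrite -!addrA; congr (_ + _); rewrite addrCA.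
have [C C0 hC] := bounded_linear_bound hT; have [D D0 hD] := bounded_linear_bound hS.
exists (C + D) => x; apply: le_trans (ler_normD _ _) _.
by rewrite mulrDl; apply: lerD.
Qed.

Lemma bounded_linear_scale (T : U -> V) a :
  bounded_linear T -> bounded_linear (fun x => a *: T x).
Proof.
move=> hT; split.
  by move=> b x y; rewrite (proj1 hT) scalerDr !scalerA mulrC.
have [C C0 hC] := bounded_linear_bound hT.
by exists (`|a| * C) => x; rewrite normrZ -mulrA; apply: ler_wpM2l.
Qed.

Lemma bounded_linear_sub (T S : U -> V) :
  bounded_linear T -> bounded_linear S -> bounded_linear (fun x => T x - S x).
Proof.
move=> hT hS; have := bounded_linear_add hT (bounded_linear_scale (-1) hS).
by under eq_fun do rewrite scaleN1r.
Qed.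

Lemma scalable_unit_ball_bound (T : U -> V) (M : R) : scalable T ->
  (forall x, `|x| <= 1 -> `|T x| <= M) -> forall x, `|T x| <= M * `|x|.
Proof.
move=> hT hM x; have [->|x0] := eqVneq x 0.
  have T0 : T 0 = 0 by rewrite -(scale0r (0 : U)) hT scale0r.
  by rewrite T0 !normr0 mulr0.
have nx : 0 < `|x| by rewrite normr_gt0.
have -> : T x = `|x| *: T (`|x|^-1 *: x).
  by rewrite hT scalerA divff ?scale1r // gt_eqF.
rewrite normrZ normr_id mulrC ler_pM2r // hM //.
by rewrite normrZ normrV ?unitfE ?gt_eqF // normr_id mulVf // gt_eqF.
Qed.

End BoundedLinear.

Lemma bounded_linear_comp (U V W : normedModType R) (T : V -> W) (S : U -> V) :
  bounded_linear T -> bounded_linear S -> bounded_linear (fun x => T (S x)).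
Proof.
move=> hT hS; split; first by move=> a x y; rewrite (proj1 hS) (proj1 hT).
have [C C0 hC] := bounded_linear_bound hT; have [D D0 hD] := bounded_linear_bound hS.
by exists (C * D) => x; apply: le_trans (hC _) _; rewrite -mulrA ler_wpM2l.
Qed.

Section Dual.
Variables U V : normedModType R.

(* [dual f] is convertible to [bounded_linear (f : U -> R^o)], so the facts
   about functionals are instances of those about operators. *)

Lemma dual_cst0 : dual (fun _ : U => 0).
Proof. exact: (@bounded_linear_cst0 _ R^o). Qed.

Lemma dual0 (f : U -> R) : dual f -> f 0 = 0.
Proof. exact: (@bounded_linear0 _ R^o). Qed.

Lemma dualZ (f : U -> R) a x : dual f -> f (a *: x) = a * f x.
Proof. exact: (@bounded_linearZ _ R^o). Qed.

Lemma dualD (f : U -> R) x y : dual f -> f (x + y) = f x + f y.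
Proof. exact: (@bounded_linearD _ R^o). Qed.

Lemma dual_bound (f : U -> R) : dual f ->
  exists2 C, 0 <= C & forall x, `|f x| <= C * `|x|.
Proof. exact: (@bounded_linear_bound _ R^o). Qed.

Lemma dual_comp (f : V -> R) (T : U -> V) :
  dual f -> bounded_linear T -> dual (fun x => f (T x)).
Proof. exact: (@bounded_linear_comp _ _ R^o). Qed.

End Dual.

Section Bidual.
Variable U : normedModType R.
Implicit Types (Phi : (U -> R) -> R) (f h : U -> R).

Lemma bidual_bound Phi : bidual Phi -> exists2 C, 0 <= C &
  forall f, dual f -> forall M, 0 <= M -> (forall x, `|f x| <= M * `|x|) ->
  `|Phi f| <= C * M.
Proof.
case=> _ [C hC]; exists `|C| => // f hf M M0 hM.
by apply: le_trans (hC f hf M M0 hM) _; apply: ler_wpM2r => //; exact: ler_norm.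
Qed.

Lemma bidual0 Phi : bidual Phi -> Phi (fun _ => 0) = 0.
Proof.
move=> /bidual_bound[C _ hC]; apply/eqP; rewrite -normr_le0.
have := hC _ (dual_cst0 U) 0 (lexx 0); rewrite mulr0; apply=> x.
by rewrite normr0 mul0r.
Qed.

Lemma bidualD Phi f h : bidual Phi -> dual f -> dual h ->
  Phi (fun x => f x + h x) = Phi f + Phi h.
Proof.
move=> hP hf hh; rewrite -[Phi f]mul1r -(proj1 hP) //.
by congr Phi; apply: funext => x; rewrite mul1r.
Qed.

Lemma bidualZ Phi a f : bidual Phi -> dual f -> Phi (fun x => a * f x) = a * Phi f.
Proof.
move=> hP hf; rewrite -[RHS]addr0 -(bidual0 hP) -(proj1 hP) //; last exact: dual_cst0.
by congr Phi; apply: funext => x; rewrite addr0.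
Qed.

End Bidual.

Lemma bidual_comp (U V : normedModType R) (Phi : (V -> R) -> R) (S : V -> U) :
  bidual Phi -> bounded_linear S ->
  bidual (fun f : U -> R => Phi (fun v => f (S v))).
Proof.
move=> hP hS; have [D D0 hD] := bounded_linear_bound hS; split.
  by move=> a f h hf hh; apply: (proj1 hP); apply: dual_comp.
have [C C0 hC] := bidual_bound hP.
exists (C * D) => f hf M M0 hM; rewrite -mulrA (mulrC D).
apply: hC; [exact: dual_comp | exact: mulr_ge0 |].
by move=> v; apply: le_trans (hM _) _; rewrite -mulrA ler_wpM2l.
Qed.

Section WeakNullDual.
Variable U : normedModType R.
Implicit Types (f h : nat -> U -> R).

Lemma weak_null_dual_cst0 : weak_null_dual (fun _ (_ : U) => 0).
Proof. by move=> Phi hP; rewrite (bidual0 hP); exact: cvg_cst. Qed.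

Lemma weak_null_dualD f h : (forall n, dual (f n)) -> (forall n, dual (h n)) ->
  weak_null_dual f -> weak_null_dual h -> weak_null_dual (fun n x => f n x + h n x).
Proof.
move=> df dh wf wh Phi hP; under eq_fun do rewrite bidualD //.
by rewrite -[0]addr0; apply: cvgD; [exact: wf | exact: wh].
Qed.

Lemma weak_null_dualZ a f : (forall n, dual (f n)) ->
  weak_null_dual f -> weak_null_dual (fun n x => a * f n x).
Proof.
move=> df wf Phi hP; under eq_fun do rewrite bidualZ //.
by rewrite -(mulr0 a); apply: cvgM; [exact: cvg_cst | exact: wf].
Qed.

End WeakNullDual.

Lemma weak_null_dual_comp (U V : normedModType R) (f : nat -> U -> R) (S : V -> U) :
  bounded_linear S -> weak_null_dual f -> weak_null_dual (fun n v => f n (S v)).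
Proof. by move=> hS wf Phi hP; exact: (wf _ (bidual_comp hP hS)). Qed.

Lemma weakstar_null_bounded (U : completeNormedModType R) (g : nat -> U -> R) :
  (forall n, dual (g n)) -> weakstar_null g ->
  exists2 K, 0 <= K & forall n x, `|g n x| <= K * `|x|.
Proof.
move=> dg wg.
have : uniform_bounded (range (g : nat -> U -> R^o)).
  apply: Banach_Steinhauss => [_ [n _ <-]|x].
    split; last by move=> a u v; rewrite (proj1 (dg n)).
    have [C C0 hC] := dual_bound (dg n).
    move=> r; exists (C * `|r|) => x xr; apply: le_trans (hC x) _.
    by rewrite ler_wpM2l // (le_trans xr) // ler_norm.
  have [M [_ hM]] : bounded_fun (fun n => g n x).
    by apply/cvg_seq_bounded/cvg_ex; exists 0; exact: wg.
  by exists (M + 1) => _ [n _ <-]; apply: (hM (M + 1)); rewrite ?ltrDl.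
move=> /(_ 1)[M hM]; exists `|M| => // n.
apply: scalable_unit_ball_bound => [a u|x x1]; first exact: dualZ.
by apply: le_trans (ler_norm _); apply: hM => //; exists n.
Qed.

Lemma cvg0_uniform_approx (u : nat -> R) :
  (forall e, 0 < e ->
     exists2 v : nat -> R, v @ \oo --> 0 & forall n, `|u n - v n| <= e) ->
  u @ \oo --> 0.
Proof.
move=> approx; apply/cvgrPdist_le => e e0.
have e20 : 0 < e / 2 by rewrite divr_gt0.
have [v /cvgrPdist_le/(_ _ e20) v0 uv] := approx _ e20.
apply: filterS v0 => n; rewrite !sub0r !normrN => vn.
rewrite -(subrK (v n) (u n)); apply: le_trans (ler_normD _ _) _.
by have := uv n; lra.
Qed.

Section Operators.
Variables (E F : normedModType R) (leF : F -> F -> Prop).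
Implicit Types (T S : E -> F).

Lemma almost_grothendieck0 : almost_grothendieck leF (fun _ : E => (0 : F)).
Proof.
split=> [|g dg _ _]; first exact: bounded_linear_cst0.
have -> : (fun n (_ : E) => g n 0) = fun _ _ => 0.
  by apply/funext => n; apply/funext => x; rewrite dual0.
exact: weak_null_dual_cst0.
Qed.

Lemma almost_grothendieckD T S : almost_grothendieck leF T ->
  almost_grothendieck leF S -> almost_grothendieck leF (fun x => T x + S x).
Proof.
move=> [hT aT] [hS aS]; split=> [|g dg disj wg]; first exact: bounded_linear_add.
have -> : (fun n x => g n (T x + S x)) = fun n x => g n (T x) + g n (S x).
  by apply/funext => n; apply/funext => x; rewrite dualD.
exact: (weak_null_dualD (fun n => dual_comp (dg n) hT) (fun n => dual_comp (dg n) hS)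
  (aT g dg disj wg) (aS g dg disj wg)).
Qed.

Lemma almost_grothendieckZ a T : almost_grothendieck leF T ->
  almost_grothendieck leF (fun x => a *: T x).
Proof.
move=> [hT aT]; split=> [|g dg disj wg]; first exact: bounded_linear_scale.
have -> : (fun n x => g n (a *: T x)) = fun n x => a * g n (T x).
  by apply/funext => n; apply/funext => x; rewrite dualZ.
exact: (weak_null_dualZ a (fun n => dual_comp (dg n) hT) (aT g dg disj wg)).
Qed.

Lemma almost_grothendieck_compr (H : normedModType R) T (S : H -> E) :
  almost_grothendieck leF T -> bounded_linear S ->
  almost_grothendieck leF (fun h => T (S h)).
Proof.
move=> [hT aT] hS; split=> [|g dg disj wg]; first exact: bounded_linear_comp.
exact: (weak_null_dual_comp hS (aT g dg disj wg)).
Qed.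

Lemma almost_grothendieck_compl (G : normedModType R) (leG : G -> G -> Prop)
    T (Rop : F -> G) :
  almost_grothendieck leF T -> bounded_linear Rop ->
  (forall g : nat -> G -> R, (forall n, dual (g n)) -> disjoint_seq leG g ->
     disjoint_seq leF (fun n y => g n (Rop y))) ->
  almost_grothendieck leG (fun x => Rop (T x)).
Proof.
move=> [hT aT] hR Rdisj; split=> [|g dg disj wg]; first exact: bounded_linear_comp.
apply: (aT (fun n y => g n (Rop y))) => [n||y].
- exact: dual_comp.
- exact: Rdisj.
- exact: wg.
Qed.

End Operators.

Lemma almost_grothendieck_closed (E : normedModType R) (F : completeNormedModType R)
    (leF : F -> F -> Prop) (Tn : nat -> E -> F) (T : E -> F) :
  (forall n, almost_grothendieck leF (Tn n)) -> bounded_linear T ->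
  (forall e : R, 0 < e -> \forall n \near \oo, forall x, `|Tn n x - T x| <= e * `|x|) ->
  almost_grothendieck leF T.
Proof.
move=> aTn hT TnT; split=> // g dg disj wg Phi hP.
have [K K0 hK] := weakstar_null_bounded dg wg.
have [C C0 hC] := bidual_bound hP.
apply: cvg0_uniform_approx => e e0.
pose d := e / (C * K + 1).
have CK0 : 0 <= C * K by rewrite mulr_ge0.
have d0 : 0 < d by rewrite divr_gt0 //; lra.
have CKd : C * (K * d) <= e by rewrite /d !mulrA ler_pdivrMr; nra.
have [N _ hN] := TnT d d0; have [hTN aTN] := aTn N.
exists (fun n => Phi (fun x => g n (Tn N x))) => [|n].
  exact: aTN g dg disj wg Phi hP.
pose h x := g n (T x - Tn N x).
have dh : dual h := dual_comp (dg n) (bounded_linear_sub hT hTN).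
have -> : Phi (fun x => g n (T x)) = Phi h + Phi (fun x => g n (Tn N x)).
  rewrite -bidualD //; last exact: dual_comp.
  by congr Phi; apply/funext => x; rewrite /h -dualD // subrK.
rewrite addrK; apply: le_trans CKd; apply: hC => // [|x].
  by rewrite mulr_ge0 // ltW.
apply: le_trans (hK n _) _; rewrite -mulrA ler_wpM2l // distrC.
by apply: hN; rewrite /= leqnn.
Qed.

End AlmostGrothendieck.

Theorem mainTheorem12 (R : realType)
  (E F G : completeNormedModType R)
  (leE : E -> E -> Prop) (leF : F -> F -> Prop) (leG : G -> G -> Prop)
  (hE : banach_lattice leE) (hF : banach_lattice leF) (hG : banach_lattice leG) :
  (* (1a) the almost Grothendieck operators form a linear subspace of L(E;F) *)
  (almost_grothendieck leF (fun _ : E => (0 : F)) /\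
   (forall T S : E -> F, almost_grothendieck leF T -> almost_grothendieck leF S ->
       almost_grothendieck leF (fun x => T x + S x)) /\
   (forall (a : R) (T : E -> F), almost_grothendieck leF T ->
       almost_grothendieck leF (fun x => a *: T x)) /\
  (* (1b) which is closed in the operator norm *)
   (forall (Tn : nat -> E -> F) (T : E -> F),
       (forall n, almost_grothendieck leF (Tn n)) -> bounded_linear T ->
       (forall e : R, 0 < e -> \forall n \near \oo,
           forall x : E, `|Tn n x - T x| <= e * `|x|) ->
       almost_grothendieck leF T) /\
  (* (1c) right composition with bounded operators from a Banach space H *)
   (forall (H : completeNormedModType R) (T : E -> F) (S : H -> E),
       almost_grothendieck leF T -> bounded_linear S ->
       almost_grothendieck leF (fun h => T (S h)))) /\
  (* (2) left composition with R whose adjoint preserves disjoint sequences *)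
  (forall (T : E -> F) (Rop : F -> G),
     almost_grothendieck leF T -> bounded_linear Rop ->
     (forall g : nat -> G -> R, (forall n, dual (g n)) -> disjoint_seq leG g ->
        disjoint_seq leF (fun n y => g n (Rop y))) ->
     almost_grothendieck leG (fun x => Rop (T x))).
Proof.
split; [split; [|split; [|split; [|split]]] |].
- exact: almost_grothendieck0.
- move=> T S; exact: almost_grothendieckD.
- move=> a T; exact: almost_grothendieckZ.
- move=> Tn T; exact: almost_grothendieck_closed.
- move=> H T S; exact: almost_grothendieck_compr.
- move=> T Rop; exact: almost_grothendieck_compl.
Qed.
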